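(* Let $m\ge 1$ and $n$ be integers with $\binom{m+1}{2}\le n\le J(m)$, where $J(m)=\sum_{j=1}^m j\lfloor m/j\rfloor$. Then there exist symmetric Knowlton-Graham partitions of $\{1,\ldots,n\}$ of order $m$. Equivalently, there is a symmetric $m\times m$ matrix with entries in $\{0,1\}$ whose row sums $(t_1,\ldots,t_m)$ (which equal its column sums) satisfy $j\mid t_j$ and $t_j\ge 1$ for all $1\le j\le m$, $t_m=m$, and $t_1+\cdots+t_m=n$. *)

From mathcomp Require Import all_boot all_algebra.
Set Implicit Arguments. Unset Strict Implicit. Unset Printing Implicit Defensive.

Definition J (m : nat) : nat := \sum_(1 <= j < m.+1) j * (m %/ j).

Definition rowsum (m : nat) (A : 'M[nat]_m) (i : 'I_m) : nat :=
  \sum_(k < m) A i k.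

(* Symmetric 0/1 m x m matrix whose row sums t_1..t_m (index j : 'I_m stands
   for the paper's j+1) satisfy (j+1) | t_j, t_j >= 1, t_m = m, sum = n. *)
Definition symKG_matrix (m n : nat) (A : 'M[nat]_m) : Prop :=
  [/\ (forall i k, A i k <= 1),
      trmx A = A,
      (forall j : 'I_m, (j.+1 %| rowsum A j) && (0 < rowsum A j)),
      (forall j : 'I_m, val j = m.-1 -> rowsum A j = m)
    & \sum_(j < m) rowsum A j = n].
Arguments symKG_matrix : clear implicits.

From mathcomp Require Import all_boot all_algebra all_fingroup.
From mathcomp Require Import zify.
Set Implicit Arguments. Unset Strict Implicit. Unset Printing Implicit Defensive.

(* Build the row-sum vector first and the matrix afterwards.  Starting from
   t_j = j, whose sum is C(m+1,2), the total is raised one unit at a time while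
   keeping j | t_j and a threshold q such that t_j = j for j >= q and
   q <= t_j <= m for all j; this goes on until every t_j is the largest
   multiple of j below m, i.e. until the sum is J(m).  The threshold makes
   every value in [q, m] occur among the t_j.  Such a vector, sorted as
   u_0 <= ... <= u_(m-1) = m, rises in unit steps, and then the Hankel matrix
   with entries [a + b >= m - 1 or u_(a+b) = u_(a+b+1)] has row sums u. *)

Lemma sum_succ_binomial m : \sum_(i < m) i.+1 = 'C(m.+1, 2).
Proof.
elim: m => [|m IHm]; first by rewrite big_ord0 bin_small.
by rewrite big_ord_recr /= IHm [RHS]binS bin1.
Qed.

Lemma J_sum_ord m : J m = \sum_(i < m) i.+1 * (m %/ i.+1).
Proof. by rewrite /J big_add1 /= big_mkord. Qed.

Lemma sum_eta_update m (t : nat -> nat) a v : a < m ->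
  \sum_(k < m) [eta t with a |-> v] k + t a = \sum_(k < m) t k + v.
Proof.
move=> lt_am; rewrite (bigD1 (Ordinal lt_am)) // [in RHS](bigD1 (Ordinal lt_am)) //=.
rewrite eqxx (eq_bigr (fun k : 'I_m => t k)); first lia.
by move=> k; rewrite -val_eqE /= => /negbTE ->.
Qed.

Lemma dvdn_eq_mul_div d x m :
  0 < d -> d %| x -> x <= m < x + d -> x = d * (m %/ d).
Proof.
move=> d_gt0 /dvdnP [c ->] /andP [le_m lt_m].
rewrite mulnC; congr (_ * _); apply/eqP; rewrite eqn_leq leq_divRL // le_m.
by rewrite -ltnS ltn_divLR // mulSn addnC.
Qed.

Definition hankel_entry n (u : nat -> nat) c : nat := (n <= c) || (u c == u c.+1).

Lemma hankel_row_succ n u a :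
  \sum_(b < n.+1) hankel_entry n u (a + b) + 1 =
  hankel_entry n u a + \sum_(b < n.+1) hankel_entry n u (a.+1 + b).
Proof.
rewrite big_ord_recl big_ord_recr /= addn0 -addnA; congr (_ + _).
have -> : hankel_entry n u (a.+1 + n) = 1 by rewrite /hankel_entry leq_addl.
by congr (_ + _); apply: eq_bigr => b _; rewrite /bump add1n addnS.
Qed.

(* Row a has the a + 1 ones with a + b >= n, plus one for each flat step of u
   on [a, n); as u rises by n.+1 - u a over these n - a steps, there are
   u a - a - 1 flat ones. *)
Lemma hankel_row_sum n u :
  (forall c, c < n -> u c <= u c.+1 <= (u c).+1) -> u n = n.+1 ->
  forall a, a <= n -> \sum_(b < n.+1) hankel_entry n u (a + b) = u a.
Proof.
move=> u_steps u_n a /subKn <-; elim: (n - a) (leq_subr a n) => [|d IHd] le_dn.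
  rewrite subn0 u_n -[RHS]card_ord -sum1_card.
  by apply: eq_bigr => b _; rewrite /hankel_entry leq_addr.
have lt_an : n - d.+1 < n by lia.
have a_succ : (n - d.+1).+1 = n - d by lia.
have entry_a : hankel_entry n u (n - d.+1) = (u (n - d.+1) == u (n - d)) :> nat.
  by rewrite /hankel_entry leqNgt lt_an a_succ.
have := hankel_row_succ n u (n - d.+1).
rewrite a_succ (IHd (ltnW le_dn)) entry_a.
have := u_steps _ lt_an; rewrite a_succ.
by case: eqP => /= [->|]; lia.
Qed.

Lemma sorted_unit_steps (s : seq nat) M :
  sorted leq s -> (forall x, x \in s -> x <= M) ->
  (forall x v, x \in s -> x <= v <= M -> v \in s) ->
  forall c, c.+1 < size s -> nth 0 s c <= nth 0 s c.+1 <= (nth 0 s c).+1.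
Proof.
(* A gap after x = s_c would force x + 1 to sit strictly between positions
   c and c + 1. *)
move=> s_sorted s_le s_closed c lt_cs.
have mono := sorted_leq_nth leq_trans leqnn 0 s_sorted.
rewrite mono ?inE ?(ltnW lt_cs) //=; rewrite leqNgt; apply/negP => gap.
have xS_in : (nth 0 s c).+1 \in s.
  apply: (s_closed (nth 0 s c)); first exact/mem_nth/ltnW.
  by rewrite leqnSn (leq_trans (ltnW gap)) // s_le ?mem_nth.
have r_lt := xS_in; rewrite -index_mem in r_lt.
have r_val := nth_index 0 xS_in.
have [le_rc|lt_cr] := leqP (index (nth 0 s c).+1 s) c.
  by have := mono _ _ r_lt (ltnW lt_cs) le_rc; rewrite r_val ltnn.
by have := mono _ _ lt_cs r_lt lt_cr; rewrite r_val leqNgt gap.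
Qed.

Lemma sort_ord_perm n (t : 'I_n -> nat) :
  exists p : 'S_n, forall j : 'I_n, nth 0 (sort leq [tuple t i | i < n]) j = t (p j).
Proof.
have [p sort_t] : exists p : 'S_n,
    sort leq [tuple t i | i < n] = [tuple tnth [tuple t i | i < n] (p i) | i < n].
  by apply/tuple_permP; rewrite perm_sort.
by exists p => j; rewrite sort_t -tnth_nth !tnth_mktuple.
Qed.

Lemma symmetric_01_realization n (t : 'I_n.+1 -> nat) :
  (forall i, t i <= n.+1) -> (exists i, t i = n.+1) ->
  (forall i v, t i <= v <= n.+1 -> exists k, t k = v) ->
  exists A : 'M[nat]_n.+1,
    [/\ forall i k, A i k <= 1, trmx A = A & forall i, rowsum A i = t i].
Proof.
move=> t_le [i_max t_max] t_closed.
pose s := sort leq [tuple t i | i < n.+1]; pose u c := nth 0 s c.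
have s_sorted : sorted leq s := sort_sorted leq_total _.
have size_s : size s = n.+1 by rewrite size_sort size_tuple.
have [p sort_p] := sort_ord_perm t.
have u_p (j : 'I_n.+1) : u j = t (p j) := sort_p j.
have mem_s x : x \in s <-> exists i, t i = x.
  rewrite mem_sort; split => [/tnthP [i ->]|[i <-]].
    by exists i; rewrite tnth_mktuple.
  by apply/tnthP; exists i; rewrite tnth_mktuple.
have u_steps c : c < n -> u c <= u c.+1 <= (u c).+1.
  move=> lt_cn; apply: (sorted_unit_steps s_sorted); last by rewrite size_s.
    by move=> x /mem_s [i <-].
  by move=> x v /mem_s [i <-] /t_closed [k <-]; apply/mem_s; exists k.
have u_n : u n = n.+1.
  have le_u_n (j : 'I_n.+1) : u j <= u n.
    by apply: (sorted_leq_nth leq_trans leqnn); rewrite ?inE ?size_s ?leq_ord.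
  apply/eqP; rewrite eqn_leq; apply/andP; split.
    by have := t_le (p ord_max); rewrite -u_p.
  by apply: leq_trans (le_u_n (p^-1 i_max)%g); rewrite u_p permKV t_max.
exists (\matrix_(i, k) hankel_entry n u ((p^-1)%g i + (p^-1)%g k))%R; split.
- by move=> i k; rewrite mxE /hankel_entry; case: (_ || _).
- by apply/matrixP => i k; rewrite !mxE addnC.
- move=> i; rewrite /rowsum (reindex_perm p); under eq_bigr do rewrite mxE permK.
  by rewrite hankel_row_sum ?leq_ord // u_p permKV.
Qed.

(* Index i stands for the paper's j = i + 1.  Rows j >= q are untouched
   (t_j = j) and the others carry multiples of j in [q, m], so every value v
   in [q, m] occurs, as t_(v-1) = v. *)
Definition kg_profile m q (t : nat -> nat) : Prop :=
  [/\ 0 < q, 2 * q <= m.+2 & forall i, i < m ->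
      [/\ i.+1 %| t i, q <= t i, t i <= m & (q <= i.+1 -> t i = i.+1)]].

Lemma kg_profile_succn m : kg_profile m 1 succn.
Proof. by split => // i _; split. Qed.

Section ProfileMoves.

Variables (m q : nat) (t : nat -> nat).
Hypothesis t_profile : kg_profile m q t.

Lemma kg_profile_value v : q <= v <= m -> t v.-1 = v.
Proof.
case: t_profile => q_gt0 _ t_ok /andP [le_qv le_vm].
have lt_v1m : v.-1 < m by lia.
by have [_ _ _ ->] := t_ok v.-1 lt_v1m; lia.
Qed.

Lemma kg_profile_bump_first :
  t 0 < m -> kg_profile m (maxn q 2) [eta t with 0 |-> (t 0).+1].
Proof.
case: t_profile => q_gt0 le_2q_m t_ok lt_t0m.
have m_gt0 : 0 < m by lia.
have [_ le_q_t0 _ t0_min] := t_ok 0 m_gt0.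
split => [||i lt_im /=]; first lia.
  by case: (leqP q 1) => [/t0_min|]; lia.
case: eqP => [->|ne_i0]; first by split; rewrite ?dvd1n //; lia.
have [dvd_ti le_q_ti le_ti_m ti_min] := t_ok i lt_im.
split => // [|le_i]; last by apply: ti_min; lia.
by case: (leqP q i.+1) => [/ti_min|]; lia.
Qed.

Lemma kg_profile_transfer i :
  0 < i -> i.+1 < q -> t 0 = m -> t i + i.+1 <= m ->
  kg_profile m q [eta t with 0 |-> m - i, i |-> t i + i.+1].
Proof.
case: t_profile => q_gt0 le_2q_m t_ok i_gt0 lt_iq t0_m le_m.
split => // j lt_jm /=.
case: eqP => [->|_]; first by split; rewrite ?dvd1n //; lia.
case: eqP => [->|_]; last exact: t_ok.
have [dvd_ti le_q_ti _ _] := t_ok i (ltac:(lia)).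
by split; [rewrite dvdn_add | lia | lia | lia].
Qed.

Lemma kg_profile_raise :
  t 0 = m -> 2 * q <= m -> (forall i, 0 < i -> i.+1 < q -> m < t i + i.+1) ->
  kg_profile m q.+1 [eta t with 0 |-> m - q.-1, q.-1 |-> 2 * q].
Proof.
case: t_profile => q_gt0 le_2q_m t_ok t0_m le_2q no_transfer.
have m_gt0 : 0 < m by lia.
have q_gt1 : 1 < q.
  by have [_ _ _ t0_min] := t_ok 0 m_gt0; case: (leqP q 1) => [/t0_min|]; lia.
split => [||j lt_jm /=]; try lia.
case: eqP => [->|j_gt0]; first by split; rewrite ?dvd1n //; lia.
case: eqP => [->|ne_jq].
  by rewrite prednK //; split; [rewrite dvdn_mull | lia | lia | lia].
have [dvd_tj le_q_tj le_tj_m tj_min] := t_ok j lt_jm.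
split => // [|le_j]; last by apply: tj_min; lia.
case: (leqP q j.+1) => [/tj_min|lt_jq]; first lia.
by have := no_transfer j (ltac:(lia)) lt_jq; lia.
Qed.

Lemma kg_profile_stuck_sum :
  t 0 = m -> m < 2 * q -> (forall i, 0 < i -> i.+1 < q -> m < t i + i.+1) ->
  \sum_(i < m) t i = J m.
Proof.
case: t_profile => _ _ t_ok t0_m lt_m2q no_transfer.
rewrite J_sum_ord; apply: eq_bigr => -[i lt_im] _ /=.
have [dvd_ti _ le_ti_m ti_min] := t_ok i lt_im.
apply: dvdn_eq_mul_div => //; rewrite le_ti_m /=.
case: (posnP i) => [->|i_gt0]; first by rewrite t0_m addn1.
case: (leqP q i.+1) => [le_qi|lt_iq]; first by rewrite ti_min //; lia.
exact: no_transfer.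
Qed.

End ProfileMoves.

Lemma kg_profile_succ m q t :
  kg_profile m q t -> \sum_(i < m) t i < J m ->
  exists q' t', kg_profile m q' t' /\ \sum_(i < m) t' i = (\sum_(i < m) t i).+1.
Proof.
move=> t_profile lt_J.
have m_gt0 : 0 < m by case: (posnP m) lt_J => // ->; rewrite big_ord0 /J big_geq.
have [q_gt0 le_2q_m t_ok] := t_profile.
have [_ _ le_t0m t0_min] := t_ok 0 m_gt0.
have [lt_t0m|t0_m] : t 0 < m \/ t 0 = m by lia.
  exists (maxn q 2), [eta t with 0 |-> (t 0).+1].
  split; first exact: kg_profile_bump_first.
  by have := sum_eta_update t (t 0).+1 m_gt0; lia.
case: (boolP [exists i : 'I_m, [&& 0 < i, i.+1 < q & t i + i.+1 <= m]]).
  case/existsP => -[i lt_im] /and3P [/= i_gt0 lt_iq le_m].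
  exists q, [eta t with 0 |-> m - i, i |-> t i + i.+1].
  split; first exact: kg_profile_transfer.
  have := sum_eta_update t (t i + i.+1) lt_im.
  have := sum_eta_update [eta t with i |-> t i + i.+1] (m - i) m_gt0.
  by rewrite /= eq_sym (gtn_eqF i_gt0); lia.
move/existsPn => no_transfer'.
have no_transfer i : 0 < i -> i.+1 < q -> m < t i + i.+1.
  move=> i_gt0 lt_iq; have lt_im : i < m by lia.
  by have := no_transfer' (Ordinal lt_im); rewrite /= i_gt0 lt_iq ltnNge.
have [le_2q|lt_m2q] := leqP (2 * q) m; last first.
  by move: lt_J; rewrite (kg_profile_stuck_sum t_profile) ?ltnn.
have q_gt1 : 1 < q by case: (leqP q 1) => [/t0_min|]; lia.
have lt_q1m : q.-1 < m by lia.
exists q.+1, [eta t with 0 |-> m - q.-1, q.-1 |-> 2 * q].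
split; first exact: kg_profile_raise.
have t_q1 : t q.-1 = q by apply: kg_profile_value; [exact: t_profile | lia].
have := sum_eta_update t (2 * q) lt_q1m.
have := sum_eta_update [eta t with q.-1 |-> 2 * q] (m - q.-1) m_gt0.
by rewrite /= eq_sym (gtn_eqF (_ : 0 < q.-1)) ?t_q1; lia.
Qed.

Lemma kg_profile_exists m n :
  'C(m.+1, 2) <= n -> n <= J m ->
  exists q t, kg_profile m q t /\ \sum_(i < m) t i = n.
Proof.
move=> /subnKC <-; elim: (n - _) => [|k IHk] le_kJ.
  exists 1, succn; split; first exact: kg_profile_succn.
  by rewrite addn0 sum_succ_binomial.
have [|q [t [t_profile t_sum]]] := IHk; first lia.
have [|q' [t' [t'_profile t'_sum]]] := kg_profile_succ t_profile; first lia.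
by exists q', t'; rewrite t'_sum t_sum addnS.
Qed.

Lemma kg_profile_realization m q t :
  kg_profile m.+1 q t ->
  exists A : 'M[nat]_m.+1,
    [/\ forall i k, A i k <= 1, trmx A = A & forall i, rowsum A i = t i].
Proof.
move=> t_profile; have [q_gt0 le_2q t_ok] := t_profile.
apply: symmetric_01_realization => [i||i v /andP [le_tv le_vm]].
- by have [_ _ le_ti _] := t_ok i (ltn_ord i).
- by exists ord_max; apply: (kg_profile_value t_profile (v := m.+1)); lia.
have [_ le_q_ti _ _] := t_ok i (ltn_ord i).
have lt_v1m : v.-1 < m.+1 by lia.
by exists (Ordinal lt_v1m); apply: (kg_profile_value t_profile); lia.
Qed.

Theorem theorem2 (m n : nat) :
  1 <= m -> 'C(m.+1, 2) <= n -> n <= J m ->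
  exists A : 'M[nat]_m, symKG_matrix m n A.
Proof.
case: m => [//|m] _ le_Cn le_nJ.
have [q [t [t_profile t_sum]]] := kg_profile_exists le_Cn le_nJ.
have [A [A01 A_sym A_rows]] := kg_profile_realization t_profile.
have [q_gt0 le_2q t_ok] := t_profile.
exists A; split => // [j|j /= j_max|]; rewrite ?A_rows.
- by have [dvd_tj le_q_tj _ _] := t_ok j (ltn_ord j); rewrite dvd_tj; lia.
- by rewrite j_max; apply: (kg_profile_value t_profile (v := m.+1)); lia.
- by rewrite -t_sum; apply: eq_bigr => j _; rewrite A_rows.
Qed.
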